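(* Assume (A1) and let $i,j\in I_N$. Each of the functions $\mathcal{D}_{\mathrm{junction}}^{ji}$, $\mathcal{D}_{\mathrm{linear}}^{ji}$, $\mathcal{D}_{\mathrm{implicit}}^{ji}$ is convex and $C^1$ on $J_j^*\times J_i^*$ (as a function of $(y_j,x_i)\in(0,\infty)^2$), and if $\tilde{\mathcal{D}}$ denotes any one of them, then for all $(y,x)\in J_j^*\times J_i^*$, $$\tilde{\mathcal{D}}-x_i\partial_{x_i}\tilde{\mathcal{D}}-y_j\partial_{y_j}\tilde{\mathcal{D}}+H_i(\partial_{x_i}\tilde{\mathcal{D}})=0,\qquad \tilde{\mathcal{D}}-x_i\partial_{x_i}\tilde{\mathcal{D}}-y_j\partial_{y_j}\tilde{\mathcal{D}}+H_j(-\partial_{y_j}\tilde{\mathcal{D}})=0,$$ all quantities evaluated at $(y,x)$.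
   Context: Junction: fix an integer $N\ge1$ and $N$ distinct unit vectors $e_1,\dots,e_N\in\mathbb{R}^2$. Set $J_i=[0,\infty)e_i$, $J_i^*=J_i\setminus\{0\}$, $J=\bigcup_iJ_i$, $I_N=\{1,\dots,N\}$. Each $x\in J_i$ is written $x=x_ie_i$, $x_i\ge0$. For a function $f$ on $J\times J$ (variables $(y,x)$), $f^{ji}$ denotes its restriction to $J_j\times J_i$, viewed as a function of $(y_j,x_i)$. (A1): there is $\gamma>0$ with $L_i\in C^2(\mathbb{R})$, $L_i''\ge\gamma$ for each $i$; $H_i(p)=\sup_{q\in\mathbb{R}}(pq-L_i(q))$. $L_0(0)=\min_jL_j(0)$, $I_0=\{l:L_l(0)=L_0(0)\}$. $K_l(\xi)=L_l(\xi)-\xi L_l'(\xi)-L_0(0)$; $\xi_l^-\le0$ (resp. $\xi_l^+\ge0$) is the unique zero of $K_l$ on $(-\infty,0]$ (resp. $[0,\infty)$). For $\tau\in[0,1]$: $\mathcal{E}_1(\tau,y)=\tau L_j(-y_j/\tau)-\tau L_0(0)$ if $y=y_je_j\ne0$, $\tau\ne0$; $\mathcal{E}_1(\tau,0)=0$; $\mathcal{E}_1(0,y)=+\infty$ if $y\ne0$. $\mathcal{E}_2(\tau,x)=(1-\tau)L_i(x_i/(1-\tau))+\tau L_0(0)$ if $x=x_ie_i\ne0$, $\tau\ne1$; $\mathcal{E}_2(\tau,0)=L_0(0)$; $\mathcal{E}_2(1,x)=+\infty$ if $x\ne0$. $\mathcal{D}_{\mathrm{junction}}(y,x)=\inf_{0\le\tau_1\le\tau_2\le1}\{\mathcal{E}_1(\tau_1,y)+\mathcal{E}_2(\tau_2,x)\}$;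 $\mathcal{D}_{\mathrm{implicit}}(y,x)=\inf_{0\le\tau\le1}\{\mathcal{E}_1(\tau,y)+\mathcal{E}_2(\tau,x)\}$; for $(y,x)\in J_j\times J_i$, $\mathcal{D}_{\mathrm{linear}}^{ji}(y,x)=-L_j'(\xi_j^-)y_j+L_i'(\xi_i^+)x_i+L_0(0)$. *)

From Stdlib Require Import Reals Lra List ClassicalEpsilon.
Open Scope R_scope.

(* Extended real with +oo : None = +infinity. *)
Definition Rinfty := option R.

Definition is_glb (S : R -> Prop) (m : R) : Prop :=
  (forall r, S r -> m <= r) /\ (forall b, (forall r, S r -> b <= r) -> b <= m).
Definition Rinf (S : R -> Prop) : R := epsilon (inhabits 0) (is_glb S).
Definition Rsup (S : R -> Prop) : R := epsilon (inhabits 0) (is_lub S).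

(* L_0(0) = min_{j in I_N} L_j(0), with I_N = {0,...,N-1} (N >= 1). *)
Definition L0min (N : nat) (L : nat -> R -> R) : R :=
  fold_right Rmin (L 0%nat 0) (map (fun l => L l 0) (seq 0 N)).

Definition Hconj (Li : R -> R) (p : R) : R :=
  Rsup (fun r => exists q, r = p * q - Li q).

Definition Kfun (Ll dLl : R -> R) (L0 : R) (xi : R) : R :=
  Ll xi - xi * dLl xi - L0.

(* A point y = y_j e_j of branch J_j is given by its coordinate y_j >= 0;
   y_j = 0 is the junction point 0. *)
Definition E1 (Lj : R -> R) (L0 : R) (tau yj : R) : Rinfty :=
  if Req_EM_T yj 0 then Some 0
  else if Req_EM_T tau 0 then None
  else Some (tau * Lj (- yj / tau) - tau * L0).

Definition E2 (Li : R -> R) (L0 : R) (tau xi : R) : Rinfty :=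
  if Req_EM_T xi 0 then Some L0
  else if Req_EM_T tau 1 then None
  else Some ((1 - tau) * Li (xi / (1 - tau)) + tau * L0).

(* D_junction^{ji}(y_j, x_i): infimum over 0 <= t1 <= t2 <= 1 of
   E1(t1,y) + E2(t2,x), where +oo values are discarded (they never
   affect the infimum, since finite values always exist). *)
Definition Djunction (Lj Li : R -> R) (L0 : R) (yj xi : R) : R :=
  Rinf (fun r => exists t1 t2 a b, 0 <= t1 <= t2 /\ t2 <= 1 /\
          E1 Lj L0 t1 yj = Some a /\ E2 Li L0 t2 xi = Some b /\ r = a + b).

Definition Dimplicit (Lj Li : R -> R) (L0 : R) (yj xi : R) : R :=
  Rinf (fun r => exists t a b, 0 <= t <= 1 /\
          E1 Lj L0 t yj = Some a /\ E2 Li L0 t xi = Some b /\ r = a + b).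

Definition Dlinear (dLj dLi : R -> R) (xim_j xip_i L0 : R) (yj xi : R) : R :=
  - dLj xim_j * yj + dLi xip_i * xi + L0.

Definition quad (y x : R) : Prop := 0 < y /\ 0 < x.

Definition convex_quad (f : R -> R -> R) : Prop :=
  forall y1 x1 y2 x2 t, quad y1 x1 -> quad y2 x2 -> 0 <= t <= 1 ->
    f (t * y1 + (1 - t) * y2) (t * x1 + (1 - t) * x2)
      <= t * f y1 x1 + (1 - t) * f y2 x2.

Definition cont2_at (g : R -> R -> R) (y x : R) : Prop :=
  forall eps, 0 < eps -> exists delta, 0 < delta /\
    forall y' x', Rabs (y' - y) < delta -> Rabs (x' - x) < delta ->
      Rabs (g y' x' - g y x) < eps.

Definition C1_quad_with (f dy dx : R -> R -> R) : Prop :=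
  forall y x, quad y x ->
    derivable_pt_lim (fun y' => f y' x) y (dy y x) /\
    derivable_pt_lim (fun x' => f y x') x (dx y x) /\
    cont2_at dy y x /\ cont2_at dx y x.

Definition junction_property (Hj Hi : R -> R) (D : R -> R -> R) : Prop :=
  convex_quad D /\
  exists dy dx : R -> R -> R,
    C1_quad_with D dy dx /\
    forall y x, quad y x ->
      D y x - x * dx y x - y * dy y x + Hi (dx y x) = 0 /\
      D y x - x * dx y x - y * dy y x + Hj (- dy y x) = 0.

(* For D_implicit and D_junction the
      infimum is attained at an optimal configuration (times and velocities
      whose tangents have equal intercepts, found by the intermediate value
      theorem); the tangent plane of that configuration lies below every
      admissible energy and the energy with frozen times is an upper contact
      function.  The Hamilton–Jacobi identities are the Legendre identity. *)

From Pilot Require Import Defs.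
From Stdlib Require Import Reals Lra ClassicalEpsilon.
Open Scope R_scope.

Lemma Rinf_attained (S : R -> Prop) (m : R) :
  S m -> (forall r, S r -> m <= r) -> Rinf S = m.
Proof.
  intros Hm Hlow. assert (Hglb : is_glb S m) by (split; auto).
  unfold Rinf. destruct (epsilon_spec (inhabits 0) (is_glb S) (ex_intro _ _ Hglb)) as [H1 H2].
  apply Rle_antisym; [apply H1 | apply H2]; auto.
Qed.

Lemma Rsup_attained (S : R -> Prop) (m : R) :
  S m -> (forall r, S r -> r <= m) -> Rsup S = m.
Proof.
  intros Hm Hup. assert (Hlub : is_lub S m) by (split; [exact Hup | intros b Hb; apply Hb; auto]).
  unfold Rsup. destruct (epsilon_spec (inhabits 0) (is_lub S) (ex_intro _ _ Hlub)) as [H1 H2].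
  apply Rle_antisym; [apply H2; exact Hup | apply H1; exact Hm].
Qed.

Lemma lt_Rmin (a d1 d2 : R) : a < Rmin d1 d2 -> a < d1 /\ a < d2.
Proof. intros H. apply Rmin_Rgt in H. exact H. Qed.

Ltac split_Rmin H :=
  match type of H with
  | _ < Rmin _ _ =>
      let H1 := fresh H in let H2 := fresh H in
      destruct (lt_Rmin _ _ _ H) as [H1 H2]; clear H; split_Rmin H1; split_Rmin H2
  | _ => idtac
  end.

Lemma mul_abs_bound (a z d : R) : Rabs z < d -> - (Rabs a * d) <= a * z <= Rabs a * d.
Proof.
  intros Hz. assert (Habs : Rabs (a * z) <= Rabs a * d).
  { rewrite Rabs_mult. apply Rmult_le_compat_l; [apply Rabs_pos | lra]. }
  pose proof (Rle_abs (a * z)). pose proof (Rle_abs (- (a * z))).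
  rewrite Rabs_Ropp in *. lra.
Qed.

Lemma derivable_pt_lim_affine (a v z0 z : R) :
  derivable_pt_lim (fun w => a + v * (w - z0)) z v.
Proof.
  intros eps Heps. exists (mkposreal 1 Rlt_0_1). intros h Hh _.
  replace ((a + v * (z + h - z0) - (a + v * (z - z0))) / h - v) with 0 by (field; auto).
  rewrite Rabs_R0; auto.
Qed.

Lemma symmetric_step (g : R -> R) (z l eps r : R) :
  derivable_pt_lim g z l -> 0 < eps -> 0 < r ->
  exists h, 0 < h <= r /\ Rabs (g (z + h) - g z - h * l) < h * eps /\
    Rabs (g (z - h) - g z + h * l) < h * eps.
Proof.
  intros Hg Heps Hr. destruct (Hg eps Heps) as [d Hd].
  set (h := Rmin d r / 2).
  assert (Hmin : 0 < Rmin d r) by (apply Rmin_glb_lt; [apply cond_pos | exact Hr]).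
  assert (0 < h /\ h < d /\ h <= r) as [Hh0 [Hhd Hhr]].
  { pose proof (Rmin_l d r). pose proof (Rmin_r d r). unfold h. lra. }
  clearbody h. exists h. split; [lra | split].
  - replace (g (z + h) - g z - h * l) with (h * ((g (z + h) - g z) / h - l)) by (field; lra).
    rewrite Rabs_mult, (Rabs_right h); [| lra]. apply Rmult_lt_compat_l; [lra |].
    apply Hd; [lra | rewrite Rabs_right; lra].
  - replace (z - h) with (z + - h) by ring.
    replace (g (z + - h) - g z + h * l) with (- h * ((g (z + - h) - g z) / - h - l)) by (field; lra).
    rewrite Rabs_mult, Rabs_Ropp, (Rabs_right h); [| lra]. apply Rmult_lt_compat_l; [lra |].
    apply Hd; [lra | rewrite Rabs_Ropp, Rabs_right; lra].
Qed.

Lemma derivable_pt_lim_plus_const (f : R -> R) (k z l : R) :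
  derivable_pt_lim f z l -> derivable_pt_lim (fun w => f w + k) z l.
Proof.
  intros Hf. replace l with (l + 0) by ring.
  exact (derivable_pt_lim_plus _ _ _ _ _ Hf (derivable_pt_lim_const k z)).
Qed.

Lemma derivable_pt_lim_scaled (f f' : R -> R) (c k z : R) :
  (forall w, derivable_pt_lim f w (f' w)) ->
  derivable_pt_lim (fun w => c * f (k * w)) z (c * k * f' (k * z)).
Proof.
  intros Hf.
  assert (Hlin : derivable_pt_lim (fun w => k * w) z k).
  { apply (derivable_pt_lim_ext (fun w => 0 + k * (w - 0))); [intros; ring |].
    apply derivable_pt_lim_affine. }
  replace (c * k * f' (k * z)) with (c * (f' (k * z) * k)) by ring.
  exact (derivable_pt_lim_scal _ c _ _ (derivable_pt_lim_comp _ _ _ _ _ Hlin (Hf (k * z)))).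
Qed.

Lemma derivable_pt_lim_squeeze (f l u : R -> R) (z v r : R) :
  0 < r -> (forall w, Rabs (w - z) < r -> l w <= f w <= u w) ->
  l z = f z -> u z = f z ->
  derivable_pt_lim l z v -> derivable_pt_lim u z v -> derivable_pt_lim f z v.
Proof.
  intros Hr Hsq Hlz Huz Hl Hu eps Heps.
  destruct (Hl eps Heps) as [dl Hdl]. destruct (Hu eps Heps) as [du Hdu].
  assert (Hd : 0 < Rmin r (Rmin dl du)) by (repeat apply Rmin_glb_lt; auto using cond_pos).
  exists (mkposreal _ Hd). intros h Hh0 Hh. simpl in Hh.
  destruct (lt_Rmin _ _ _ Hh) as [Hhr Hh']. destruct (lt_Rmin _ _ _ Hh') as [Hhl Hhu].
  specialize (Hdl h Hh0 Hhl). specialize (Hdu h Hh0 Hhu).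
  rewrite Hlz in Hdl. rewrite Huz in Hdu.
  destruct (Hsq (z + h)) as [Hlf Hfu]; [replace (z + h - z) with h by ring; exact Hhr |].
  set (ql := (l (z + h) - f z) / h) in Hdl.
  set (qu := (u (z + h) - f z) / h) in Hdu.
  set (q := (f (z + h) - f z) / h).
  assert (Eql : ql * h = l (z + h) - f z) by (unfold ql; field; auto).
  assert (Equ : qu * h = u (z + h) - f z) by (unfold qu; field; auto).
  assert (Eq : q * h = f (z + h) - f z) by (unfold q; field; auto).
  assert (Hbetween : (ql <= q <= qu) \/ (qu <= q <= ql)).
  { destruct (Rlt_or_le 0 h) as [Hpos | Hneg].
    - left. split; apply (Rmult_le_reg_r h); lra.
    - right. assert (h < 0) by lra.
      split; apply (Rmult_le_reg_r (- h)); lra. }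
  apply Rabs_def2 in Hdl. apply Rabs_def2 in Hdu. apply Rabs_def1; lra.
Qed.

Lemma cont2_at_separable (F : R -> R -> R) (g1 g2 : R -> R) (c y x : R) :
  (forall a b, F a b = g1 a + g2 b + c) ->
  continuity_pt g1 y -> continuity_pt g2 x -> cont2_at F y x.
Proof.
  intros HF H1 H2 eps Heps.
  destruct (H1 (eps / 2)) as [d1 [Hd1 H1']]; [lra |].
  destruct (H2 (eps / 2)) as [d2 [Hd2 H2']]; [lra |].
  exists (Rmin d1 d2). split; [apply Rmin_glb_lt; auto |].
  intros a b Ha Hb. destruct (lt_Rmin _ _ _ Ha) as [Ha1 _]. destruct (lt_Rmin _ _ _ Hb) as [_ Hb2].
  assert (E1 : Rabs (g1 a - g1 y) < eps / 2).
  { destruct (Req_dec a y) as [-> | Hne]; [unfold Rminus; rewrite Rplus_opp_r, Rabs_R0; lra |].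
    apply (H1' a). split; [split; [exact I | auto] | exact Ha1]. }
  assert (E2 : Rabs (g2 b - g2 x) < eps / 2).
  { destruct (Req_dec b x) as [-> | Hne]; [unfold Rminus; rewrite Rplus_opp_r, Rabs_R0; lra |].
    apply (H2' b). split; [split; [exact I | auto] | exact Hb2]. }
  rewrite !HF. replace (g1 a + g2 b + c - (g1 y + g2 x + c)) with ((g1 a - g1 y) + (g2 b - g2 x)) by ring.
  eapply Rle_lt_trans; [apply Rabs_triang | lra].
Qed.

Lemma continuity_pt_comp_ratio (k u : R -> R) (c s : R) :
  continuity k -> continuity_pt u s -> u s <> 0 ->
  continuity_pt (fun w => k (c / u w)) s.
Proof.
  intros Hk Hu Hus.
  apply (continuity_pt_comp (fun w => c / u w) k); [| apply Hk].
  apply (continuity_pt_div (fct_cte c) u); auto.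
  apply continuity_pt_const. intros ? ?; reflexivity.
Qed.

Lemma ratio_le_double (w s : R) : 0 < w -> 1 / 2 <= s -> 0 < w / s <= 2 * w.
Proof.
  intros Hw Hs. split; [apply Rdiv_lt_0_compat; lra |].
  apply (Rmult_le_reg_r s); [lra |]. replace (w / s * s) with w by (field; lra). nra.
Qed.

Lemma le_of_deriv_nonneg (g g' : R -> R) (u v : R) :
  u <= v -> (forall c, u <= c <= v -> derivable_pt_lim g c (g' c)) ->
  (forall c, u < c < v -> 0 <= g' c) -> g u <= g v.
Proof.
  intros Huv Hg Hpos. destruct (Req_dec u v) as [-> | Hne]; [lra |].
  destruct (MVT_cor2 g g' u v) as [c [Hc Hrange]]; [lra | exact Hg |].
  specialize (Hpos c Hrange). nra.
Qed.

Lemma le_of_deriv_nonpos (g g' : R -> R) (u v : R) :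
  u <= v -> (forall c, u <= c <= v -> derivable_pt_lim g c (g' c)) ->
  (forall c, u < c < v -> g' c <= 0) -> g v <= g u.
Proof.
  intros Huv Hg Hneg. destruct (Req_dec u v) as [-> | Hne]; [lra |].
  destruct (MVT_cor2 g g' u v) as [c [Hc Hrange]]; [lra | exact Hg |].
  specialize (Hneg c Hrange). nra.
Qed.

Section StronglyConvex.
Variables (f f' f'' : R -> R) (gamma : R).
Hypothesis Hgamma : 0 < gamma.
Hypothesis Hf' : forall z, derivable_pt_lim f z (f' z).
Hypothesis Hf'' : forall z, derivable_pt_lim f' z (f'' z).
Hypothesis Hconvex : forall z, gamma <= f'' z.

Lemma tangent_below (b q : R) : f b + f' b * (q - b) <= f q.
Proof.
  set (gap := fun w => f w - f b - f' b * (w - b)).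
  assert (Hgap : forall w, derivable_pt_lim gap w (f' w - f' b)).
  { intros w. apply (derivable_pt_lim_ext (fun w => f w - (f b + f' b * (w - b)))).
    - intros; unfold gap; ring.
    - replace (f' w - f' b) with (f' w - (0 + f' b)) by ring.
      apply (derivable_pt_lim_minus f (fun w => f b + f' b * (w - b))); auto.
      apply (derivable_pt_lim_ext (fun w => (f b - f' b * b) + f' b * (w - 0))).
      + intros; ring.
      + replace (0 + f' b) with (f' b) by ring. apply derivable_pt_lim_affine. }
  (* f' is nondecreasing, so gap is minimal at b, where it vanishes *)
  assert (Hmono : forall u v, u <= v -> f' u <= f' v).
  { intros u v Huv. apply (le_of_deriv_nonneg f' f''); auto.
    intros c _. pose proof (Hconvex c). lra. }
  assert (gap b <= gap q).
  { destruct (Rle_dec b q) as [Hbq | Hqb].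
    - apply (le_of_deriv_nonneg gap (fun w => f' w - f' b)); auto.
      intros c Hc. pose proof (Hmono b c). lra.
    - apply (le_of_deriv_nonpos gap (fun w => f' w - f' b)); [lra | auto |].
      intros c Hc. pose proof (Hmono c b). lra. }
  unfold gap in H. lra.
Qed.

(* Legendre identity: the supremum defining H(f'(b)) is attained at q = b. *)
Lemma Hconj_at_slope (b : R) : Hconj f (f' b) = b * f' b - f b.
Proof.
  apply Rsup_attained.
  - exists b. ring.
  - intros r [q ->]. pose proof (tangent_below b q). lra.
Qed.

(* Intercept at the origin of the tangent line at z: I(z) = f(z) - z f'(z).
   Up to the constant L_0(0) this is the function K of the paper. *)
Definition intercept (z : R) : R := f z - z * f' z.

Lemma intercept_deriv (z : R) : derivable_pt_lim intercept z (- z * f'' z).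
Proof.
  pose proof (derivable_pt_lim_mult id f' z _ _ (derivable_pt_lim_id z) (Hf'' z)) as Hprod.
  replace (- z * f'' z) with (f' z - (1 * f' z + id z * f'' z)) by (unfold id; ring).
  exact (derivable_pt_lim_minus _ _ _ _ _ (Hf' z) Hprod).
Qed.

Lemma intercept_continuous : continuity intercept.
Proof.
  intros z. apply derivable_continuous_pt. exact (exist _ _ (intercept_deriv z)).
Qed.

Lemma intercept_increasing_neg (u v : R) : u <= v -> v <= 0 -> intercept u <= intercept v.
Proof.
  intros Huv Hv. apply (le_of_deriv_nonneg intercept (fun z => - z * f'' z)); auto.
  - intros; apply intercept_deriv.
  - intros c Hc. pose proof (Hconvex c). nra.
Qed.

Lemma intercept_decreasing_pos (u v : R) : 0 <= u -> u <= v -> intercept v <= intercept u.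
Proof.
  intros Hu Huv. apply (le_of_deriv_nonpos intercept (fun z => - z * f'' z)); auto.
  - intros; apply intercept_deriv.
  - intros c Hc. pose proof (Hconvex c). nra.
Qed.

Lemma intercept_quadratic_bound (z : R) : intercept z <= intercept 0 - gamma * (z * z) / 2.
Proof.
  set (h := fun w => intercept w + gamma / 2 * (w * w)).
  assert (Hh : forall w, derivable_pt_lim h w (- w * (f'' w - gamma))).
  { intros w.
    pose proof (derivable_pt_lim_mult id id w _ _ (derivable_pt_lim_id w) (derivable_pt_lim_id w)) as Hsq.
    pose proof (derivable_pt_lim_plus _ _ _ _ _ (intercept_deriv w)
                  (derivable_pt_lim_scal _ (gamma / 2) _ _ Hsq)) as Hsum.
    replace (- w * (f'' w - gamma)) with (- w * f'' w + gamma / 2 * (1 * id w + id w * 1))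
      by (unfold id; field).
    exact Hsum. }
  (* h = I + gamma w^2/2 is maximal at 0 *)
  assert (h z <= h 0).
  { destruct (Rle_dec z 0) as [Hz | Hz].
    - apply (le_of_deriv_nonneg h (fun w => - w * (f'' w - gamma))); auto.
      intros c Hc. pose proof (Hconvex c). nra.
    - apply (le_of_deriv_nonpos h (fun w => - w * (f'' w - gamma))); [lra | auto |].
      intros c Hc. pose proof (Hconvex c). nra. }
  unfold h in H. lra.
Qed.

Lemma intercept_small_time (w C : R) :
  w <> 0 -> exists tau, 0 < tau <= 1 / 2 /\ intercept (w / tau) < C.
Proof.
  intros Hw.
  set (A := Rabs (intercept 0 - C) + 1).
  assert (HA : 1 <= A) by (unfold A; pose proof (Rabs_pos (intercept 0 - C)); lra).
  assert (Hw2 : 0 < w * w) by (apply Rsqr_pos_lt; exact Hw).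
  set (M := gamma * (w * w) / (2 * A)).
  assert (HM : 0 < M) by (unfold M; apply Rdiv_lt_0_compat; nra).
  set (tau := Rmin (1 / 2) M).
  assert (Htau : 0 < tau) by (apply Rmin_glb_lt; lra).
  assert (Htau2 : tau * tau <= M).
  { assert (tau <= 1 / 2) by apply Rmin_l. assert (tau <= M) by apply Rmin_r. nra. }
  exists tau. split; [split; [exact Htau | apply Rmin_l] |].
  set (z := w / tau).
  assert (Hz : z * tau = w) by (unfold z; field; lra).
  (* gamma z^2 tau^2 = gamma w^2 = 2 A M >= 2 A tau^2 *)
  assert (Hgz : 2 * A <= gamma * (z * z)).
  { assert (HMA : M * (2 * A) = gamma * (w * w)) by (unfold M; field; lra).
    apply (Rmult_le_reg_r (tau * tau)); [nra |].
    replace (gamma * (z * z) * (tau * tau)) with (gamma * (w * w)) by (rewrite <- Hz; ring).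
    nra. }
  pose proof (intercept_quadratic_bound z).
  pose proof (Rle_abs (intercept 0 - C)). unfold A in Hgz. lra.
Qed.

End StronglyConvex.

Definition supporting_plane (D : R -> R -> R) (y x vy vx : R) : Prop :=
  forall y' x', quad y' x' -> D y x + vy * (y' - y) + vx * (x' - x) <= D y' x'.

Definition upper_contact (D G : R -> R -> R) (y x vy vx : R) : Prop :=
  (forall y' x', quad y' x' -> D y' x' <= G y' x') /\ G y x = D y x /\ cont2_at G y x /\
  derivable_pt_lim (fun y' => G y' x) y vy /\ derivable_pt_lim (fun x' => G y x') x vx.

Definition hj_identities (Hj Hi : R -> R) (D : R -> R -> R) (y x vy vx : R) : Prop :=
  D y x - x * vx - y * vy + Hi vx = 0 /\ D y x - x * vx - y * vy + Hj (- vy) = 0.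

Lemma convex_of_supporting_planes (D dy dx : R -> R -> R) :
  (forall y x, quad y x -> supporting_plane D y x (dy y x) (dx y x)) -> convex_quad D.
Proof.
  intros Hsp y1 x1 y2 x2 t Hq1 Hq2 Ht.
  set (ym := t * y1 + (1 - t) * y2). set (xm := t * x1 + (1 - t) * x2).
  assert (Hq : quad ym xm) by (destruct Hq1, Hq2; unfold ym, xm; split; nra).
  pose proof (Hsp _ _ Hq _ _ Hq1) as S1. pose proof (Hsp _ _ Hq _ _ Hq2) as S2.
  apply (Rmult_le_compat_l t) in S1; [| lra].
  apply (Rmult_le_compat_l (1 - t)) in S2; [| lra].
  (* the two affine terms cancel in the convex combination *)
  assert (t * (ym - y1) + (1 - t) * (ym - y2) = 0 /\ t * (xm - x1) + (1 - t) * (xm - x2) = 0)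
    as [Ey Ex] by (unfold ym, xm; split; ring).
  nra.
Qed.

(* Squeezed between its supporting plane and an upper contact function,
   D is continuous at the contact point. *)
Lemma continuous_of_contact (D G : R -> R -> R) (y x vy vx : R) :
  quad y x -> supporting_plane D y x vy vx -> upper_contact D G y x vy vx -> cont2_at D y x.
Proof.
  intros [Hy Hx] Hsp [Hle [HG [HGc _]]] eps Heps.
  destruct (HGc eps Heps) as [d1 [Hd1 HG1]].
  set (A := Rabs vy + Rabs vx + 1).
  assert (HA : 1 <= A) by (unfold A; pose proof (Rabs_pos vy); pose proof (Rabs_pos vx); lra).
  set (e := eps / A).
  assert (0 < e /\ A * e = eps) as [He HAe] by (unfold e; split; [apply Rdiv_lt_0_compat | field]; lra).
  exists (Rmin d1 (Rmin e (Rmin y x))). split; [repeat apply Rmin_glb_lt; auto |].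
  intros y' x' Hy' Hx'.
  split_Rmin Hy'. split_Rmin Hx'.
  assert (Hq' : quad y' x').
  { pose proof (Rabs_def2 (y' - y) y ltac:(assumption)).
    pose proof (Rabs_def2 (x' - x) x ltac:(assumption)). split; lra. }
  pose proof (Hle y' x' Hq') as Hup. pose proof (Hsp y' x' Hq') as Hlow.
  pose proof (HG1 y' x' ltac:(assumption) ltac:(assumption)) as HGnear.
  rewrite HG in HGnear. apply Rabs_def2 in HGnear.
  pose proof (mul_abs_bound vy (y' - y) e ltac:(assumption)).
  pose proof (mul_abs_bound vx (x' - x) e ltac:(assumption)).
  apply Rabs_def1; unfold A in HAe; nra.
Qed.

Lemma partial_y_of_contact (D G : R -> R -> R) (y x vy vx : R) :
  quad y x -> supporting_plane D y x vy vx -> upper_contact D G y x vy vx ->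
  derivable_pt_lim (fun y' => D y' x) y vy.
Proof.
  intros [Hy Hx] Hsp [Hle [HG [_ [HGy _]]]].
  apply (derivable_pt_lim_squeeze _ (fun y' => D y x + vy * (y' - y)) (fun y' => G y' x) y vy y Hy).
  - intros w Hw. apply Rabs_def2 in Hw.
    assert (Hq : quad w x) by (split; lra).
    pose proof (Hsp w x Hq). pose proof (Hle w x Hq). split; lra.
  - ring.
  - exact HG.
  - exact (derivable_pt_lim_affine _ _ _ _).
  - exact HGy.
Qed.

Lemma supporting_plane_slope (D : R -> R -> R) (y x vy vx h : R) :
  supporting_plane D y x vy vx -> quad (y + h) x -> h * vy <= D (y + h) x - D y x.
Proof.
  intros Hsp Hq. pose proof (Hsp _ _ Hq) as H.
  replace (y + h - y) with h in H by ring. replace (x - x) with 0 in H by ring. lra.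
Qed.

(* For a continuous function with supporting planes everywhere, a partial
   derivative in y is continuous: slopes at nearby points are controlled by
   the difference quotients of D over a fixed step h, which converge. *)
Lemma partial_y_continuous (D dy dx : R -> R -> R) (y x : R) :
  (forall y' x', quad y' x' -> cont2_at D y' x') ->
  (forall y' x', quad y' x' -> supporting_plane D y' x' (dy y' x') (dx y' x')) ->
  derivable_pt_lim (fun y' => D y' x) y (dy y x) -> quad y x -> cont2_at dy y x.
Proof.
  intros Hcont Hsp Hder Hq eps Heps. pose proof Hq as [Hy Hx].
  destruct (symmetric_step _ y (dy y x) (eps / 4) (y / 2) Hder) as [h [[Hh0 Hhy] [Bp Bm]]];
    [lra | lra |].
  apply Rabs_def2 in Bp. apply Rabs_def2 in Bm.
  assert (Qp : quad (y + h) x) by (split; lra). assert (Qm : quad (y - h) x) by (split; lra).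
  assert (He : 0 < h * (eps / 8)) by nra.
  destruct (Hcont _ _ Qp _ He) as [d1 [Hd1 C1]].
  destruct (Hcont _ _ Qm _ He) as [d2 [Hd2 C2]].
  destruct (Hcont _ _ Hq _ He) as [d3 [Hd3 C3]].
  exists (Rmin (Rmin d1 d2) (Rmin d3 (Rmin (y / 2) x))). split; [repeat apply Rmin_glb_lt; lra |].
  intros y' x' Hy' Hx'. split_Rmin Hy'. split_Rmin Hx'.
  pose proof (Rabs_def2 (y' - y) (y / 2) ltac:(assumption)).
  pose proof (Rabs_def2 (x' - x) x ltac:(assumption)).
  assert (Q : quad y' x') by (split; lra).
  assert (Q1 : quad (y' + h) x') by (split; lra).
  assert (Q2 : quad (y' + - h) x') by (split; lra).
  pose proof (supporting_plane_slope _ _ _ _ _ _ (Hsp _ _ Q) Q1) as S1.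
  pose proof (supporting_plane_slope _ _ _ _ _ _ (Hsp _ _ Q) Q2) as S2.
  replace (y' + - h) with (y' - h) in S2 by ring.
  pose proof (C1 (y' + h) x' ltac:(replace (y' + h - (y + h)) with (y' - y) by ring; assumption)
    ltac:(assumption)) as N1.
  pose proof (C2 (y' - h) x' ltac:(replace (y' - h - (y - h)) with (y' - y) by ring; assumption)
    ltac:(assumption)) as N2.
  pose proof (C3 y' x' ltac:(assumption) ltac:(assumption)) as N3.
  apply Rabs_def2 in N1. apply Rabs_def2 in N2. apply Rabs_def2 in N3.
  assert (U : h * (dy y' x' - dy y x) < h * eps) by lra.
  assert (L : h * (- eps) < h * (dy y' x' - dy y x)) by lra.
  apply Rmult_lt_reg_l in U; [| lra]. apply Rmult_lt_reg_l in L; [| lra].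
  apply Rabs_def1; lra.
Qed.

(* Exchanging the two variables reduces statements about x to statements
   about y. *)
Definition swap2 (F : R -> R -> R) : R -> R -> R := fun a b => F b a.

Lemma quad_swap (y x : R) : quad y x -> quad x y.
Proof. intros [Hy Hx]; split; auto. Qed.

Lemma cont2_at_swap (g : R -> R -> R) (y x : R) : cont2_at g y x -> cont2_at (swap2 g) x y.
Proof.
  intros H eps Heps. destruct (H eps Heps) as [d [Hd H']].
  exists d. split; [exact Hd |]. intros a b Ha Hb. apply H'; auto.
Qed.

Lemma supporting_plane_swap (D : R -> R -> R) (y x vy vx : R) :
  supporting_plane D y x vy vx -> supporting_plane (swap2 D) x y vx vy.
Proof. intros H x' y' Hq. unfold swap2. pose proof (H y' x' (quad_swap _ _ Hq)). lra. Qed.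

Lemma upper_contact_swap (D G : R -> R -> R) (y x vy vx : R) :
  upper_contact D G y x vy vx -> upper_contact (swap2 D) (swap2 G) x y vx vy.
Proof.
  intros [Hle [HG [Hc [Hdy Hdx]]]]. unfold swap2.
  repeat split; auto.
  - intros a b Hq. apply Hle, quad_swap, Hq.
  - exact (cont2_at_swap _ _ _ Hc).
Qed.

Lemma regularity_criterion (D dy dx : R -> R -> R) :
  (forall y x, quad y x -> supporting_plane D y x (dy y x) (dx y x) /\
     exists G, upper_contact D G y x (dy y x) (dx y x)) ->
  convex_quad D /\ C1_quad_with D dy dx.
Proof.
  intros Hdata.
  assert (Hsp : forall y x, quad y x -> supporting_plane D y x (dy y x) (dx y x))
    by (intros y x Hq; apply Hdata, Hq).
  assert (Hcont : forall y x, quad y x -> cont2_at D y x).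
  { intros y x Hq. destruct (Hdata y x Hq) as [Hs [G HG]]. exact (continuous_of_contact _ _ _ _ _ _ Hq Hs HG). }
  assert (Hdy : forall y x, quad y x -> derivable_pt_lim (fun y' => D y' x) y (dy y x)).
  { intros y x Hq. destruct (Hdata y x Hq) as [Hs [G HG]]. exact (partial_y_of_contact _ _ _ _ _ _ Hq Hs HG). }
  assert (Hdx : forall y x, quad y x -> derivable_pt_lim (fun x' => D y x') x (dx y x)).
  { intros y x Hq. destruct (Hdata y x Hq) as [Hs [G HG]].
    exact (partial_y_of_contact _ _ _ _ _ _ (quad_swap _ _ Hq) (supporting_plane_swap _ _ _ _ _ Hs)
             (upper_contact_swap _ _ _ _ _ _ HG)). }
  split; [exact (convex_of_supporting_planes D dy dx Hsp) |].
  intros y x Hq. split; [auto | split; [auto | split]].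
  - exact (partial_y_continuous D dy dx y x Hcont Hsp (Hdy y x Hq) Hq).
  - apply (cont2_at_swap (swap2 dx) x y).
    apply (partial_y_continuous (swap2 D) (swap2 dx) (swap2 dy) x y).
    + intros a b Hq'. apply cont2_at_swap, Hcont, quad_swap, Hq'.
    + intros a b Hq'. apply supporting_plane_swap, Hsp, quad_swap, Hq'.
    + exact (Hdx y x Hq).
    + exact (quad_swap _ _ Hq).
Qed.

Lemma junction_property_intro (Hj Hi : R -> R) (D : R -> R -> R) :
  (forall y x, quad y x -> exists vy vx, supporting_plane D y x vy vx /\
     (exists G, upper_contact D G y x vy vx) /\ hj_identities Hj Hi D y x vy vx) ->
  junction_property Hj Hi D.
Proof.
  intros Hdata.
  destruct (choice (fun (p v : R * R) => quad (fst p) (snd p) ->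
      supporting_plane D (fst p) (snd p) (fst v) (snd v) /\
      (exists G, upper_contact D G (fst p) (snd p) (fst v) (snd v)) /\
      hj_identities Hj Hi D (fst p) (snd p) (fst v) (snd v))) as [grad Hgrad].
  { intros [y x]. destruct (classic (quad y x)) as [Hq | Hq].
    - destruct (Hdata y x Hq) as [vy [vx Hv]]. exists (vy, vx). intros _. exact Hv.
    - exists (0, 0). intros Hq'. contradiction. }
  set (dy := fun y x => fst (grad (y, x))). set (dx := fun y x => snd (grad (y, x))).
  destruct (regularity_criterion D dy dx) as [Hconv HC1].
  { intros y x Hq. destruct (Hgrad (y, x) Hq) as [Hs [HG _]]. split; [exact Hs | exact HG]. }
  split; [exact Hconv |]. exists dy, dx. split; [exact HC1 |].
  intros y x Hq. exact (proj2 (proj2 (Hgrad (y, x) Hq))).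
Qed.

(* The two branch Lagrangians L_j (incoming) and L_i (outgoing), and L0 = L_0(0). *)
Section Candidates.
Variables (Lj dLj d2Lj Li dLi d2Li : R -> R) (gamma L0 : R).
Hypothesis Hgamma : 0 < gamma.
Hypothesis HLj' : forall z, derivable_pt_lim Lj z (dLj z).
Hypothesis HLj'' : forall z, derivable_pt_lim dLj z (d2Lj z).
Hypothesis HLj_convex : forall z, gamma <= d2Lj z.
Hypothesis HLi' : forall z, derivable_pt_lim Li z (dLi z).
Hypothesis HLi'' : forall z, derivable_pt_lim dLi z (d2Li z).
Hypothesis HLi_convex : forall z, gamma <= d2Li z.

Notation Ij := (intercept Lj dLj).
Notation Ii := (intercept Li dLi).

(* Total cost of the path that leaves y at speed -y/t1 on J_j, waits at the
   junction during [t1, t2] and reaches x at speed x/(1 - t2) on J_i: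
   E1(t1, y) + E2(t2, x) for 0 < t1 <= t2 < 1 and y, x <> 0. *)
Definition energy (t1 t2 y x : R) : R :=
  t1 * Lj (- y / t1) + (1 - t2) * Li (x / (1 - t2)) + (t2 - t1) * L0.

Lemma E1_E2_finite (t1 t2 y x a b : R) : quad y x ->
  Defs.E1 Lj L0 t1 y = Some a -> Defs.E2 Li L0 t2 x = Some b ->
  t1 <> 0 /\ t2 <> 1 /\ a + b = energy t1 t2 y x.
Proof.
  intros [Hy Hx]. unfold Defs.E1, Defs.E2, energy.
  destruct (Req_EM_T y 0); [lra |]. destruct (Req_EM_T x 0); [lra |].
  destruct (Req_EM_T t1 0); [discriminate |]. destruct (Req_EM_T t2 1); [discriminate |].
  intros Ha Hb. injection Ha as <-. injection Hb as <-. repeat split; auto. ring.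
Qed.

Lemma E1_E2_energy (t1 t2 y x : R) : quad y x -> t1 <> 0 -> t2 <> 1 ->
  exists a b, Defs.E1 Lj L0 t1 y = Some a /\ Defs.E2 Li L0 t2 x = Some b /\ energy t1 t2 y x = a + b.
Proof.
  intros [Hy Hx] Ht1 Ht2. unfold Defs.E1, Defs.E2, energy.
  destruct (Req_EM_T y 0); [lra |]. destruct (Req_EM_T x 0); [lra |].
  destruct (Req_EM_T t1 0); [contradiction |]. destruct (Req_EM_T t2 1); [contradiction |].
  do 2 eexists. split; [reflexivity | split; [reflexivity | ring]].
Qed.

Definition junction_values (y x r : R) : Prop :=
  exists t1 t2 a b, 0 <= t1 <= t2 /\ t2 <= 1 /\
    Defs.E1 Lj L0 t1 y = Some a /\ Defs.E2 Li L0 t2 x = Some b /\ r = a + b.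

Definition implicit_values (y x r : R) : Prop :=
  exists t a b, 0 <= t <= 1 /\
    Defs.E1 Lj L0 t y = Some a /\ Defs.E2 Li L0 t x = Some b /\ r = a + b.

Lemma energy_junction_value (t1 t2 y x : R) :
  quad y x -> 0 < t1 <= t2 -> t2 < 1 -> junction_values y x (energy t1 t2 y x).
Proof.
  intros Hq Ht Ht2. destruct (E1_E2_energy t1 t2 y x Hq) as [a [b [Ha [Hb E]]]];
    [apply Rgt_not_eq; lra | apply Rlt_not_eq; lra |].
  exists t1, t2, a, b. repeat split; auto; lra.
Qed.

Lemma energy_implicit_value (t y x : R) :
  quad y x -> 0 < t < 1 -> implicit_values y x (energy t t y x).
Proof.
  intros Hq Ht. destruct (E1_E2_energy t t y x Hq) as [a [b [Ha [Hb E]]]];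
    [apply Rgt_not_eq; lra | apply Rlt_not_eq; lra |].
  exists t, a, b. repeat split; auto; lra.
Qed.

Lemma energy_above_tangent_plane (t1 t2 y x a b c : R) :
  0 < t1 <= t2 -> t2 < 1 -> (t1 = t2 \/ c <= L0) -> Ij a = c -> Ii b = c ->
  c - y * dLj a + x * dLi b <= energy t1 t2 y x.
Proof.
  intros Ht1 Ht2 Hwait Ha Hb. unfold intercept in Ha, Hb. unfold energy.
  pose proof (tangent_below Lj dLj d2Lj gamma Hgamma HLj' HLj'' HLj_convex a (- y / t1)) as Tj.
  pose proof (tangent_below Li dLi d2Li gamma Hgamma HLi' HLi'' HLi_convex b (x / (1 - t2))) as Ti.
  apply (Rmult_le_compat_l t1) in Tj; [| lra].
  apply (Rmult_le_compat_l (1 - t2)) in Ti; [| lra].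
  replace (t1 * (Lj a + dLj a * (- y / t1 - a))) with (t1 * (Lj a - a * dLj a) - y * dLj a)
    in Tj by (field; lra).
  replace ((1 - t2) * (Li b + dLi b * (x / (1 - t2) - b))) with ((1 - t2) * (Li b - b * dLi b) + x * dLi b)
    in Ti by (field; lra).
  rewrite Ha in Tj. rewrite Hb in Ti.
  assert (0 <= (t2 - t1) * (L0 - c)) by (destruct Hwait as [-> | Hc]; [lra | apply Rmult_le_pos; lra]).
  nra.
Qed.

Lemma junction_values_above (y x a b c r : R) : quad y x -> c <= L0 -> Ij a = c -> Ii b = c ->
  junction_values y x r -> c - y * dLj a + x * dLi b <= r.
Proof.
  intros Hq Hc Ha Hb [t1 [t2 [u [v [Ht [Ht2 [Hu [Hv ->]]]]]]]].
  destruct (E1_E2_finite _ _ _ _ _ _ Hq Hu Hv) as [Ht1' [Ht2' ->]].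
  apply energy_above_tangent_plane; auto; lra.
Qed.

Lemma implicit_values_above (y x a b c r : R) : quad y x -> Ij a = c -> Ii b = c ->
  implicit_values y x r -> c - y * dLj a + x * dLi b <= r.
Proof.
  intros Hq Ha Hb [t [u [v [Ht [Hu [Hv ->]]]]]].
  destruct (E1_E2_finite _ _ _ _ _ _ Hq Hu Hv) as [Ht1' [Ht2' ->]].
  apply energy_above_tangent_plane; auto; lra.
Qed.

Definition optimal (y x t1 t2 a b c : R) : Prop :=
  0 < t1 <= t2 /\ t2 < 1 /\ y = - t1 * a /\ x = (1 - t2) * b /\
  Ij a = c /\ Ii b = c /\ (t1 = t2 \/ c = L0).

Lemma energy_at_optimal (y x t1 t2 a b c : R) :
  optimal y x t1 t2 a b c -> energy t1 t2 y x = c - y * dLj a + x * dLi b.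
Proof.
  intros [Ht1 [Ht2 [Hy [Hx [Ha [Hb Hwait]]]]]]. unfold energy.
  replace (- y / t1) with a by (subst; field; lra).
  replace (x / (1 - t2)) with b by (subst; field; lra).
  unfold intercept in Ha, Hb. subst y x.
  destruct Hwait as [<- | ->]; nra.
Qed.

Lemma energy_partial_y (t1 t2 y x : R) :
  t1 <> 0 -> derivable_pt_lim (fun y' => energy t1 t2 y' x) y (- dLj (- y / t1)).
Proof.
  intros Ht1. assert (Hlin : forall w, - / t1 * w = - w / t1) by (intros; field; auto).
  apply (derivable_pt_lim_ext
    (fun w => t1 * Lj (- / t1 * w) + ((1 - t2) * Li (x / (1 - t2)) + (t2 - t1) * L0))).
  { intros w. unfold energy. rewrite Hlin. ring. }
  replace (- dLj (- y / t1)) with (t1 * - / t1 * dLj (- / t1 * y)) by (rewrite Hlin; field; auto).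
  apply derivable_pt_lim_plus_const, derivable_pt_lim_scaled, HLj'.
Qed.

Lemma energy_partial_x (t1 t2 y x : R) :
  t2 <> 1 -> derivable_pt_lim (fun x' => energy t1 t2 y x') x (dLi (x / (1 - t2))).
Proof.
  intros Ht2. assert (Hlin : forall w, / (1 - t2) * w = w / (1 - t2)) by (intros; field; lra).
  apply (derivable_pt_lim_ext
    (fun w => (1 - t2) * Li (/ (1 - t2) * w) + (t1 * Lj (- y / t1) + (t2 - t1) * L0))).
  { intros w. unfold energy. rewrite Hlin. ring. }
  replace (dLi (x / (1 - t2))) with ((1 - t2) * / (1 - t2) * dLi (/ (1 - t2) * x))
    by (rewrite Hlin; field; lra).
  apply derivable_pt_lim_plus_const, derivable_pt_lim_scaled, HLi'.
Qed.

Lemma energy_continuous (t1 t2 y x : R) : t1 <> 0 -> t2 <> 1 -> cont2_at (energy t1 t2) y x.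
Proof.
  intros Ht1 Ht2.
  apply (cont2_at_separable _ (fun a => energy t1 t2 a x) (fun b => energy t1 t2 y b)
           (- energy t1 t2 y x)).
  - intros a b. unfold energy. ring.
  - apply derivable_continuous_pt. exact (exist _ _ (energy_partial_y t1 t2 y x Ht1)).
  - apply derivable_continuous_pt. exact (exist _ _ (energy_partial_x t1 t2 y x Ht2)).
Qed.

Definition residual (y x t : R) : R := Ij (- y / t) - Ii (x / (1 - t)).

(* For t small the speed y/t on J_j is large, so I_j(-y/t) is very negative. *)
Lemma residual_neg_near_0 (y x : R) : quad y x -> exists t, 0 < t <= 1 / 2 /\ residual y x t < 0.
Proof.
  intros [Hy Hx].
  destruct (intercept_small_time Lj dLj d2Lj gamma Hgamma HLj' HLj'' HLj_convex (- y) (Ii (2 * x)))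
    as [t [Ht Hsmall]]; [apply Rlt_not_eq; lra |].
  exists t. split; [exact Ht |]. unfold residual.
  destruct (ratio_le_double x (1 - t)) as [Hpos Hle]; [lra | lra |].
  pose proof (intercept_decreasing_pos Li dLi d2Li gamma Hgamma HLi' HLi'' HLi_convex
                (x / (1 - t)) (2 * x) ltac:(lra) Hle).
  lra.
Qed.

(* Symmetrically, for t close to 1 the term I_i(x/(1-t)) is very negative. *)
Lemma residual_pos_near_1 (y x : R) : quad y x -> exists t, 1 / 2 <= t < 1 /\ 0 < residual y x t.
Proof.
  intros [Hy Hx].
  destruct (intercept_small_time Li dLi d2Li gamma Hgamma HLi' HLi'' HLi_convex x (Ij (- (2 * y))))
    as [s [Hs Hsmall]]; [apply Rgt_not_eq; lra |].
  exists (1 - s). split; [lra |]. unfold residual.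
  replace (1 - (1 - s)) with s by ring.
  destruct (ratio_le_double y (1 - s)) as [Hpos Hle]; [lra | lra |].
  replace (- y / (1 - s)) with (- (y / (1 - s))) by (field; lra).
  pose proof (intercept_increasing_neg Lj dLj d2Lj gamma Hgamma HLj' HLj'' HLj_convex
                (- (2 * y)) (- (y / (1 - s))) ltac:(lra) ltac:(lra)).
  lra.
Qed.

Lemma residual_continuous (y x t : R) : 0 < t < 1 -> continuity_pt (residual y x) t.
Proof.
  intros Ht.
  apply (continuity_pt_minus (fun s => Ij (- y / id s)) (fun s => Ii (x / (fct_cte 1 - id)%F s))).
  - apply continuity_pt_comp_ratio.
    + exact (intercept_continuous Lj dLj d2Lj HLj' HLj'').
    + apply derivable_continuous_pt, derivable_pt_id.
    + apply Rgt_not_eq. unfold id. lra.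
  - apply continuity_pt_comp_ratio.
    + exact (intercept_continuous Li dLi d2Li HLi' HLi'').
    + apply continuity_pt_minus; [apply continuity_pt_const; intros ? ?; reflexivity |].
      apply derivable_continuous_pt, derivable_pt_id.
    + apply Rgt_not_eq. unfold fct_cte, minus_fct, id. lra.
Qed.

(* The implicit problem always has an optimal configuration (no waiting):
   the residual changes sign on (0, 1). *)
Lemma implicit_optimal_exists (y x : R) : quad y x -> exists t a b c, optimal y x t t a b c.
Proof.
  intros Hq. pose proof Hq as [Hy Hx].
  destruct (residual_neg_near_0 y x Hq) as [s0 [Hs0 Hneg]].
  destruct (residual_pos_near_1 y x Hq) as [s1 [Hs1 Hpos]].
  assert (Hlt : s0 < s1).
  { destruct (Rle_lt_dec s1 s0) as [Hle | Hlt]; [| exact Hlt].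
    replace s1 with s0 in Hpos by lra. lra. }
  destruct (Ranalysis5.IVT_interv (residual y x) s0 s1) as [t [Ht Hzero]]; auto.
  { intros s Hs. apply residual_continuous. lra. }
  exists t, (- y / t), (x / (1 - t)), (Ij (- y / t)).
  unfold residual in Hzero.
  split; [lra | split; [lra | split; [field; lra | split; [field; lra | split]]]].
  - reflexivity.
  - split; [lra | left; reflexivity].
Qed.

(* The junction problem has an optimal configuration with c <= L0: either the
   straight tangent configuration with intercept L0 fits in time 1 (and the
   path waits at the junction), or the implicit one does and has c <= L0. *)
Lemma junction_optimal_exists (xm xp y x : R) :
  xm <= 0 -> Ij xm = L0 -> 0 <= xp -> Ii xp = L0 -> quad y x ->
  exists t1 t2 a b c, optimal y x t1 t2 a b c /\ c <= L0.
Proof.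
  intros Hxm Kxm Hxp Kxp Hq. pose proof Hq as [Hy Hx].
  destruct (classic (xm < 0 /\ 0 < xp /\ y / (- xm) + x / xp <= 1)) as [[H1 [H2 H3]] | Hn].
  - exists (y / (- xm)), (1 - x / xp), xm, xp, L0.
    assert (0 < y / (- xm)) by (apply Rdiv_lt_0_compat; lra).
    assert (0 < x / xp) by (apply Rdiv_lt_0_compat; lra).
    split; [| lra].
    split; [lra | split; [lra | split; [field; lra | split; [field; lra | split; [auto | split; [auto | right; auto]]]]]].
  - destruct (implicit_optimal_exists y x Hq) as [t [a [b [c Hopt]]]].
    exists t, t, a, b, c. split; [exact Hopt |].
    destruct Hopt as [Ht [Ht1 [Ey [Ex [Ka [Kb _]]]]]].
    destruct (Rle_lt_dec c L0) as [Hc | Hc]; [exact Hc | exfalso].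
    (* if c > L0, the velocities are strictly inside (xm, xp) by monotonicity
       of the intercepts, so the straight configuration would fit in time 1 *)
    assert (Ha : a < 0) by nra. assert (Hb : 0 < b) by nra.
    assert (Ha2 : xm < a).
    { destruct (Rlt_le_dec xm a) as [h | h]; [exact h |].
      pose proof (intercept_increasing_neg Lj dLj d2Lj gamma Hgamma HLj' HLj'' HLj_convex a xm h Hxm).
      lra. }
    assert (Hb2 : b < xp).
    { destruct (Rlt_le_dec b xp) as [h | h]; [exact h |].
      pose proof (intercept_decreasing_pos Li dLi d2Li gamma Hgamma HLi' HLi'' HLi_convex xp b Hxp h).
      lra. }
    apply Hn. split; [lra | split; [lra |]].
    assert (y / (- xm) < t) by (apply (Rmult_lt_reg_r (- xm)); [lra |]; field_simplify; nra).
    assert (x / xp < 1 - t) by (apply (Rmult_lt_reg_r xp); [lra |]; field_simplify; nra).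
    lra.
Qed.

Lemma Djunction_min (xm xp y x : R) :
  xm <= 0 -> Ij xm = L0 -> 0 <= xp -> Ii xp = L0 -> quad y x ->
  junction_values y x (Djunction Lj Li L0 y x) /\
  forall r, junction_values y x r -> Djunction Lj Li L0 y x <= r.
Proof.
  intros Hxm Kxm Hxp Kxp Hq.
  destruct (junction_optimal_exists xm xp y x Hxm Kxm Hxp Kxp Hq)
    as [t1 [t2 [a [b [c [Hopt Hc]]]]]].
  pose proof Hopt as [Ht [Ht2 [_ [_ [Ka [Kb _]]]]]].
  assert (Hmin : forall r, junction_values y x r -> energy t1 t2 y x <= r).
  { intros r Hr. rewrite (energy_at_optimal _ _ _ _ _ _ _ Hopt).
    exact (junction_values_above y x a b c r Hq Hc Ka Kb Hr). }
  assert (Hval : Djunction Lj Li L0 y x = energy t1 t2 y x).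
  { exact (Rinf_attained (junction_values y x) _ (energy_junction_value t1 t2 y x Hq Ht Ht2) Hmin). }
  rewrite Hval. split; [exact (energy_junction_value t1 t2 y x Hq Ht Ht2) | exact Hmin].
Qed.

Lemma Dimplicit_min (y x : R) : quad y x ->
  implicit_values y x (Dimplicit Lj Li L0 y x) /\
  forall r, implicit_values y x r -> Dimplicit Lj Li L0 y x <= r.
Proof.
  intros Hq. destruct (implicit_optimal_exists y x Hq) as [t [a [b [c Hopt]]]].
  pose proof Hopt as [Ht [Ht2 [_ [_ [Ka [Kb _]]]]]].
  assert (Hmem : implicit_values y x (energy t t y x)) by (apply energy_implicit_value; auto; lra).
  assert (Hmin : forall r, implicit_values y x r -> energy t t y x <= r).
  { intros r Hr. rewrite (energy_at_optimal _ _ _ _ _ _ _ Hopt).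
    exact (implicit_values_above y x a b c r Hq Ka Kb Hr). }
  assert (Hval : Dimplicit Lj Li L0 y x = energy t t y x)
    by exact (Rinf_attained (implicit_values y x) _ Hmem Hmin).
  rewrite Hval. split; [exact Hmem | exact Hmin].
Qed.

Lemma hj_of_tangents (D : R -> R -> R) (y x a b c : R) :
  Ij a = c -> Ii b = c -> D y x = c - y * dLj a + x * dLi b ->
  hj_identities (Hconj Lj) (Hconj Li) D y x (- dLj a) (dLi b).
Proof.
  intros Ka Kb HD. unfold hj_identities. rewrite Ropp_involutive, HD.
  rewrite (Hconj_at_slope Li dLi d2Li gamma Hgamma HLi' HLi'' HLi_convex).
  rewrite (Hconj_at_slope Lj dLj d2Lj gamma Hgamma HLj' HLj'' HLj_convex).
  unfold intercept in Ka, Kb. split; lra.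
Qed.

Lemma contact_of_optimal (D : R -> R -> R) (S : R -> R -> R -> Prop) (y x t1 t2 a b c : R) :
  (forall y' x', quad y' x' -> S y' x' (D y' x') /\ forall r, S y' x' r -> D y' x' <= r) ->
  (forall y' x' r, quad y' x' -> S y' x' r -> c - y' * dLj a + x' * dLi b <= r) ->
  (forall y' x', quad y' x' -> S y' x' (energy t1 t2 y' x')) ->
  quad y x -> optimal y x t1 t2 a b c ->
  supporting_plane D y x (- dLj a) (dLi b) /\
  upper_contact D (energy t1 t2) y x (- dLj a) (dLi b) /\
  hj_identities (Hconj Lj) (Hconj Li) D y x (- dLj a) (dLi b).
Proof.
  intros Hmin Habove Henergy Hq Hopt.
  pose proof Hopt as [Ht [Ht2 [Ey [Ex [Ka [Kb _]]]]]].
  assert (Hval : D y x = c - y * dLj a + x * dLi b).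
  { apply Rle_antisym.
    - rewrite <- (energy_at_optimal _ _ _ _ _ _ _ Hopt). apply (proj2 (Hmin y x Hq)), Henergy, Hq.
    - apply (Habove y x), (proj1 (Hmin y x Hq)). exact Hq. }
  split; [| split; [| exact (hj_of_tangents D y x a b c Ka Kb Hval)]].
  - intros y' x' Hq'. pose proof (Habove y' x' _ Hq' (proj1 (Hmin y' x' Hq'))). rewrite Hval. lra.
  - split; [intros y' x' Hq'; apply (proj2 (Hmin y' x' Hq')), Henergy, Hq' |].
    split; [rewrite Hval; exact (energy_at_optimal _ _ _ _ _ _ _ Hopt) |].
    split; [apply energy_continuous; [apply Rgt_not_eq | apply Rlt_not_eq]; lra |].
    split.
      replace (- dLj a) with (- dLj (- y / t1)) by (f_equal; f_equal; subst y; field; lra).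
      apply energy_partial_y. apply Rgt_not_eq. lra.
    + replace (dLi b) with (dLi (x / (1 - t2))) by (f_equal; subst x; field; lra).
      apply energy_partial_x. apply Rlt_not_eq. lra.
Qed.

Lemma Djunction_property (xm xp : R) :
  xm <= 0 -> Ij xm = L0 -> 0 <= xp -> Ii xp = L0 ->
  junction_property (Hconj Lj) (Hconj Li) (Djunction Lj Li L0).
Proof.
  intros Hxm Kxm Hxp Kxp. apply junction_property_intro. intros y x Hq.
  destruct (junction_optimal_exists xm xp y x Hxm Kxm Hxp Kxp Hq)
    as [t1 [t2 [a [b [c [Hopt Hc]]]]]].
  pose proof Hopt as [Ht [Ht2 [_ [_ [Ka [Kb _]]]]]].
  destruct (contact_of_optimal (Djunction Lj Li L0) junction_values y x t1 t2 a b c)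
    as [Hsp [Hup Hhj]]; auto.
  - intros y' x' Hq'. exact (Djunction_min xm xp y' x' Hxm Kxm Hxp Kxp Hq').
  - intros y' x' r Hq'. exact (junction_values_above y' x' a b c r Hq' Hc Ka Kb).
  - intros y' x' Hq'. exact (energy_junction_value t1 t2 y' x' Hq' Ht Ht2).
  - exists (- dLj a), (dLi b). split; [exact Hsp | split; [exists (energy t1 t2); exact Hup | exact Hhj]].
Qed.

Lemma Dimplicit_property : junction_property (Hconj Lj) (Hconj Li) (Dimplicit Lj Li L0).
Proof.
  apply junction_property_intro. intros y x Hq.
  destruct (implicit_optimal_exists y x Hq) as [t [a [b [c Hopt]]]].
  pose proof Hopt as [Ht [Ht2 [_ [_ [Ka [Kb _]]]]]].
  destruct (contact_of_optimal (Dimplicit Lj Li L0) implicit_values y x t t a b c)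
    as [Hsp [Hup Hhj]]; auto.
  - intros y' x' Hq'. exact (Dimplicit_min y' x' Hq').
  - intros y' x' r Hq'. exact (implicit_values_above y' x' a b c r Hq' Ka Kb).
  - intros y' x' Hq'. apply energy_implicit_value; [exact Hq' | lra].
  - exists (- dLj a), (dLi b). split; [exact Hsp | split; [exists (energy t t); exact Hup | exact Hhj]].
Qed.

(* D_linear is affine: it is its own supporting plane and upper contact. *)
Lemma Dlinear_property (xm xp : R) :
  Ij xm = L0 -> Ii xp = L0 ->
  junction_property (Hconj Lj) (Hconj Li) (Dlinear dLj dLi xm xp L0).
Proof.
  intros Kxm Kxp. apply junction_property_intro. intros y x Hq.
  set (D := Dlinear dLj dLi xm xp L0).
  exists (- dLj xm), (dLi xp). split; [| split].
  - intros y' x' _. unfold D, Dlinear. lra.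
  - exists D. split; [intros; lra | split; [reflexivity | split; [| split]]].
    + apply (cont2_at_separable _ (fun a => - dLj xm * a) (fun b => dLi xp * b) L0).
      * intros; reflexivity.
      * apply derivable_continuous_pt. exists (- dLj xm).
        apply (derivable_pt_lim_ext (fun w => 0 + - dLj xm * (w - 0))); [intros; ring |].
        apply derivable_pt_lim_affine.
      * apply derivable_continuous_pt. exists (dLi xp).
        apply (derivable_pt_lim_ext (fun w => 0 + dLi xp * (w - 0))); [intros; ring |].
        apply derivable_pt_lim_affine.
    + apply (derivable_pt_lim_ext (fun w => D y x + - dLj xm * (w - y)));
        [intros; unfold D, Dlinear; ring | apply derivable_pt_lim_affine].
    + apply (derivable_pt_lim_ext (fun w => D y x + dLi xp * (w - x)));
        [intros; unfold D, Dlinear; ring | apply derivable_pt_lim_affine].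
  - apply (hj_of_tangents D y x xm xp L0 Kxm Kxp). unfold D, Dlinear. ring.
Qed.

End Candidates.

Theorem mainTheorem18
  (N : nat) (L dL d2L : nat -> R -> R) (gamma : R) (xim xip : nat -> R)
  (HN : (1 <= N)%nat)
  (* (A1): L_i in C^2 with L_i'' >= gamma > 0 *)
  (Hgamma : 0 < gamma)
  (HdL : forall l, (l < N)%nat -> forall z, derivable_pt_lim (L l) z (dL l z))
  (Hd2L : forall l, (l < N)%nat -> forall z, derivable_pt_lim (dL l) z (d2L l z))
  (Hcont : forall l, (l < N)%nat -> continuity (d2L l))
  (Hconv : forall l, (l < N)%nat -> forall z, gamma <= d2L l z)
  (* xi_l^- : the unique zero of K_l on (-oo,0];  xi_l^+ : on [0,oo) *)
  (Hxim : forall l, (l < N)%nat ->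
     xim l <= 0 /\ Kfun (L l) (dL l) (L0min N L) (xim l) = 0 /\
     forall z, z <= 0 -> Kfun (L l) (dL l) (L0min N L) z = 0 -> z = xim l)
  (Hxip : forall l, (l < N)%nat ->
     0 <= xip l /\ Kfun (L l) (dL l) (L0min N L) (xip l) = 0 /\
     forall z, 0 <= z -> Kfun (L l) (dL l) (L0min N L) z = 0 -> z = xip l)
  (i j : nat) (Hi : (i < N)%nat) (Hj : (j < N)%nat) :
  junction_property (Hconj (L j)) (Hconj (L i))
    (Djunction (L j) (L i) (L0min N L)) /\
  junction_property (Hconj (L j)) (Hconj (L i))
    (Dlinear (dL j) (dL i) (xim j) (xip i) (L0min N L)) /\
  junction_property (Hconj (L j)) (Hconj (L i))
    (Dimplicit (L j) (L i) (L0min N L)).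
Proof.
  (* K_l = I_l - L_0(0), so xi_j^- and xi_i^+ are where the intercepts equal L_0(0) *)
  destruct (Hxim j Hj) as [Hxm [Kxm _]]. destruct (Hxip i Hi) as [Hxp [Kxp _]].
  assert (Ixm : intercept (L j) (dL j) (xim j) = L0min N L) by (unfold Kfun in Kxm; unfold intercept; lra).
  assert (Ixp : intercept (L i) (dL i) (xip i) = L0min N L) by (unfold Kfun in Kxp; unfold intercept; lra).
  pose proof (Djunction_property (L j) (dL j) (d2L j) (L i) (dL i) (d2L i) gamma (L0min N L) Hgamma
    (HdL j Hj) (Hd2L j Hj) (Hconv j Hj) (HdL i Hi) (Hd2L i Hi) (Hconv i Hi)
    (xim j) (xip i) Hxm Ixm Hxp Ixp).
  pose proof (Dlinear_property (L j) (dL j) (d2L j) (L i) (dL i) (d2L i) gamma (L0min N L) Hgamma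
    (HdL j Hj) (Hd2L j Hj) (Hconv j Hj) (HdL i Hi) (Hd2L i Hi) (Hconv i Hi)
    (xim j) (xip i) Ixm Ixp).
  pose proof (Dimplicit_property (L j) (dL j) (d2L j) (L i) (dL i) (d2L i) gamma (L0min N L) Hgamma
    (HdL j Hj) (Hd2L j Hj) (Hconv j Hj) (HdL i Hi) (Hd2L i Hi) (Hconv i Hi)).
  auto.
Qed.
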